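(* Let $X$ be a Tychonoff space such that $USC_p^f(X)$ is sequentially separable. Then $C_p(X)$ and $B_1(X)$ are sequentially separable.
   Context: A topological space $Z$ is sequentially separable if it has a countable subset $D$ such that every point of $Z$ is the limit of a sequence of elements of $D$. $C_p(X)$ is the set of continuous real-valued functions on $X$ with the topology of pointwise convergence; $B_1(X)$ is the set of pointwise limits of sequences of continuous real-valued functions on $X$ with the topology of pointwise convergence. A cozero-set of $X$ is a set of the form $\{x: g(x)\neq 0\}$ with $g$ continuous real-valued on $X$. $USC^f(X)=\{f\in\mathbb{R}^X : f^{-1}((-\infty,r)) \text{ is a cozero-set of } X \text{ for every } r\in\mathbb{R}\}$, and $USC_p^f(X)$ is this set with the topology of pointwise convergence. *)

From HB Require Import structures.
From mathcomp Require Import all_boot all_order all_algebra.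
From mathcomp Require Import all_classical all_reals all_analysis.

Import Order.TTheory GRing.Theory Num.Theory.
Import numFieldNormedType.Exports.
Local Open Scope classical_set_scope.
Local Open Scope ring_scope.

Definition tychonoff_space (X : topologicalType) : Prop :=
  completely_regular_space X /\ accessible_space X.

Definition seq_separable_subspace (T : topologicalType) (Z : set T) : Prop :=
  exists D : set T, D `<=` Z /\ countable D /\
    forall z, Z z -> exists u : nat -> subspace Z,
      (forall n, D (u n)) /\ (u @ \oo --> (z : subspace Z)).

Definition cozero_set (R : realType) (X : topologicalType) (A : set X) : Prop :=
  exists g : X -> R, continuous g /\ A = [set x | g x != 0].

Definition Cfun (R : realType) (X : topologicalType) : set (X -> R) :=
  [set f | continuous f].

Definition B1fun (R : realType) (X : topologicalType) : set (X -> R) :=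
  [set f | exists u : nat -> X -> R, (forall n, continuous (u n)) /\
      forall x, (fun n => u n x) @ \oo --> f x].

Definition USCf (R : realType) (X : topologicalType) : set (X -> R) :=
  [set f | forall r : R, cozero_set R X [set x | f x < r]].

(* The countable dense set {e_j} of USC_p^f(X) yields continuous g_j with
   {e_j < 1/2} = {g_j != 0}.  The indicator of a zero-set S lies in
   USC_p^f(X), so some e_(s k) converge to it pointwise, whence x is in S iff
   g_(s k)(x) = 0 eventually: countably many continuous functions trace every
   zero-set.  A Baire-one f = lim phi_j is covered at each dyadic level 2^-m
   by the zero-sets where |phi_j - z 2^-m| <= 2^-m for all j >= J, on which
   |f - z 2^-m| <= 2^-m.  Truncating the traces of these zero-sets gives
   continuous functions of finitely many g_j: at each level take the label of
   the first code on which the g_j vanish, and add up the level increments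
   clamped to the size 3 2^-(m+1) they eventually have.  These countably many
   functions converge pointwise to f, and C(X) is contained in B_1(X). *)

From HB Require Import structures.
From mathcomp Require Import all_boot all_order all_algebra.
From mathcomp Require Import all_classical all_reals all_analysis.
From mathcomp Require Import lra.
Import Order.TTheory GRing.Theory Num.Theory.
Import numFieldNormedType.Exports.
Local Open Scope classical_set_scope.
Local Open Scope ring_scope.

Definition invpow2 {R : realType} (n : nat) : R := (2 ^+ n)^-1.

Section invpow2_theory.
Context {R : realType}.

Lemma invpow2_gt0 n : 0 < invpow2 n :> R.
Proof. by rewrite /invpow2 invr_gt0 exprn_gt0. Qed.

Lemma invpow2_le1 n : invpow2 n <= 1 :> R.
Proof. by rewrite /invpow2 invf_le1 ?exprn_gt0 // exprn_ege1 // ler1n. Qed.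

Lemma invpow2_le m n : (m <= n)%N -> invpow2 n <= invpow2 m :> R.
Proof.
by move=> mn; rewrite /invpow2 lef_pV2 ?posrE ?exprn_gt0 // ler_eXn2l // ltr1n.
Qed.

Lemma invpow2S n : invpow2 n.+1 = invpow2 n / 2 :> R.
Proof. by rewrite /invpow2 exprSr invfM. Qed.

Lemma invpow2_lt (e : R) : 0 < e -> exists n, invpow2 n < e.
Proof.
move=> e0; have [N _ small] := near_infty_natSinv_expn_lt (PosNum e0).
by exists N; rewrite /invpow2 -div1r; exact: small N (leqnn N).
Qed.

End invpow2_theory.

Section pointwise_sequential_density.
Context {R : realType} {X : topologicalType}.

Definition ptws_seq_dense (D Z : set (X -> R)) : Prop :=
  forall f, Z f -> exists u : nat -> X -> R,
    (forall n, D (u n)) /\ forall x, (fun n => u n x) @ \oo --> f x.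

Lemma subspace_ptws_cvgP (Z : set {ptws X -> R}) (u : nat -> X -> R) f :
  Z f -> (forall n, Z (u n)) ->
  (u @ \oo --> (f : subspace Z)) <-> forall x, (fun n => u n x) @ \oo --> f x.
Proof.
move=> Zf Zu; rewrite (@subspace_cvgP _ Z (u @ \oo) f _ Zf); split=> [uZ x|uf].
  have uf : u @ \oo --> (f : {ptws X -> R}) by apply: cvg_trans uZ _; exact: cvg_within.
  by move/pointwise_cvgP : uf => /(_ x).
have {}uf : u @ \oo --> (f : {ptws X -> R}) by apply/pointwise_cvgP.
by move=> A /uf [N _ uA]; exists N => // n /uA; apply.
Qed.

Lemma seq_separable_ptwsP (Z : set (X -> R)) :
  seq_separable_subspace {ptws X -> R} Z <->
  exists D, [/\ D `<=` Z, countable D & ptws_seq_dense D Z].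
Proof.
split=> [[D [DZ [cD dense]]]|[D [DZ cD dense]]].
  exists D; split=> // f Zf; have [u [Du uf]] := dense f Zf.
  have Zu n : Z (u n) by exact/DZ/Du.
  by exists u; split=> //; exact: (subspace_ptws_cvgP _ _ _ Zf Zu).1.
exists D; split=> //; split=> // f Zf; have [u [Du uf]] := dense f Zf.
have Zu n : Z (u n) by exact/DZ/Du.
by exists u; split=> //; exact: (subspace_ptws_cvgP _ _ _ Zf Zu).2.
Qed.

End pointwise_sequential_density.

Section cozero_sets.
Context {R : realType} {X : topologicalType}.
Implicit Types f g : X -> R.

Lemma continuous_uniform_approx f :
  (forall e : R, 0 < e -> exists2 g, continuous g & forall x, `|f x - g x| <= e) ->
  continuous f.
Proof.
move=> approx x; apply/cvgrPdist_lt => e e0.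
have [g cg fg] := approx (e / 3) (divr_gt0 e0 (ltr0Sn _ 2)).
near=> y; have gxy : `|g x - g y| < e / 3.
  by near: y; exact: (cvgrPdist_lt _ _).1 (cg x) _ (divr_gt0 e0 (ltr0Sn _ 2)).
move: gxy (fg x) (fg y); rewrite !ltr_norml !ler_norml.
by move=> /andP[? ?] /andP[? ?] /andP[? ?]; lra.
Unshelve. all: end_near.
Qed.

Lemma continuous_bigmax n (F : nat -> X -> R) :
  (forall j, continuous (F j)) -> continuous (fun x => \big[Num.max/0]_(j < n) F j x).
Proof.
elim: n F => [|n IH] F cF.
  by under eq_fun do rewrite big_ord0; exact: cst_continuous.
under eq_fun do rewrite big_ord_recl.
by move=> x; apply: continuous_max; [exact: cF|exact: IH (fun j => F j.+1) _ x].
Qed.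

Lemma cozero_set0 : cozero_set R X set0.
Proof.
exists (cst 0); split; first exact: cst_continuous.
by apply/seteqP; split=> x //=; rewrite eqxx.
Qed.

Lemma cozero_setT : cozero_set R X setT.
Proof.
exists (cst 1); split; first exact: cst_continuous.
by apply/seteqP; split=> x //= _; rewrite oner_eq0.
Qed.

Lemma cozero_set_gt (h : X -> R) (c : R) :
  continuous h -> cozero_set R X [set x | c < h x].
Proof.
move=> ch; exists (fun x => Num.max 0 (h x - c)); split.
  move=> x; apply: (@continuous_max R X (cst 0)); first exact: cvg_cst.
  by apply: cvgB; [exact: ch|exact: cvg_cst].
apply/seteqP; split=> x /=; first by move=> cx; rewrite gt_eqF // lt_max subr_gt0 cx orbT.
by apply: contraNT; rewrite -leNgt -subr_le0 => /max_idPl ->.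
Qed.

Lemma continuous_sup_invpow2 (b : nat -> X -> R) :
  (forall j, continuous (b j)) -> (forall j x, 0 <= b j x <= invpow2 j) ->
  continuous (fun x => sup (range (b ^~ x))).
Proof.
move=> cb b_bd; set G := fun x => _.
have b_leG j x : b j x <= G x.
  apply: ub_le_sup; last by exists j.
  exists 1 => _ [k _ <-]; have /andP[_ bk] := b_bd k x.
  exact: le_trans bk (invpow2_le1 k).
pose M n x := \big[Num.max/0]_(j < n) b j x.
have M_leG n x : M n x <= G x.
  apply: bigmax_le => [|j _]; last exact: b_leG.
  by have /andP[b0 _] := b_bd 0%N x; exact: le_trans b0 (b_leG 0%N x).
have G_leM n x : G x <= M n x + invpow2 n.
  apply: ge_sup; first by exists (b 0%N x), 0%N.
  move=> _ [j _ <-]; have [jn|nj] := ltnP j n.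
    apply: le_trans (_ : M n x <= _); first exact: (bigmax_sup (Ordinal jn)).
    by rewrite lerDl ltW ?invpow2_gt0.
  have /andP[_ bj] := b_bd j x; apply: le_trans bj _.
  by apply: le_trans (invpow2_le _ _ nj) _; rewrite lerDr; exact: bigmax_ge_id.
apply: continuous_uniform_approx => e /invpow2_lt[n ne].
exists (M n); first exact: continuous_bigmax.
by move=> x; rewrite ger0_norm ?subr_ge0 //; move: (G_leM n x) ne; lra.
Qed.

Lemma cozero_set_bigcup (A : nat -> set X) :
  (forall j, cozero_set R X (A j)) -> cozero_set R X (\bigcup_j A j).
Proof.
move=> /choice[h /all_and2[ch Ah]].
pose b j x := Num.min (invpow2 j) `|h j x|.
have b_bd j x : 0 <= b j x <= invpow2 j.
  by rewrite le_min ge_min lexx ltW ?invpow2_gt0 ?normr_ge0.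
exists (fun x => sup (range (b ^~ x))); split.
  apply: continuous_sup_invpow2 => // j x.
  apply: (@continuous_min R X (cst (invpow2 j))); first exact: cst_continuous.
  exact: continuous_comp (ch j x) (@norm_continuous _ R^o _).
have ub x : has_ubound (range (b ^~ x)).
  exists 1 => _ [k _ <-]; have /andP[_ bk] := b_bd k x.
  exact: le_trans bk (invpow2_le1 k).
apply/seteqP; split=> x /=.
  move=> [j _]; rewrite Ah /= => hj; rewrite gt_eqF //.
  have bj : b j x <= sup (range (b ^~ x)) by apply: ub_le_sup (ub x) _ _; exists j.
  by apply: lt_le_trans bj; rewrite lt_min invpow2_gt0 normr_gt0.
move=> Gx; suff [j hj] : exists j, h j x != 0 by exists j => //; rewrite Ah.
apply: contrapT => /forallNP hx; move: Gx; apply/negP; rewrite negbK.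
have b0 j : b j x = 0.
  move/negP: (hx j); rewrite negbK /b => /eqP ->.
  by rewrite normr0; apply/min_idPr/ltW/invpow2_gt0.
have -> : range (b ^~ x) = [set 0].
  by apply/seteqP; split=> [_ [j _ <-]|_ ->]; [rewrite b0|exists 0%N].
by rewrite sup1.
Qed.

End cozero_sets.

Section zero_set_traces.
Context {R : realType} {X : topologicalType}.

Definition zero_set_trace (g : nat -> X -> R) : Prop :=
  forall S : set X, cozero_set R X (~` S) ->
    exists s : nat -> nat, forall x, S x <-> \forall k \near \oo, g (s k) x = 0.

Lemma USCf_indic (S : set X) : cozero_set R X (~` S) -> USCf R X (\1_S).
Proof.
move=> cS r; have [r_le0|r_gt0] := leP r 0.
  rewrite (_ : [set _ | _] = set0); first exact: cozero_set0.
  by apply/seteqP; split=> x //=; rewrite indicE ltNge (le_trans r_le0).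
have [r_gt1|r_le1] := ltP 1 r.
  rewrite (_ : [set _ | _] = setT); first exact: cozero_setT.
  by apply/seteqP; split=> x //= _; rewrite indicE (le_lt_trans _ r_gt1) // lern1 leq_b1.
rewrite (_ : [set _ | _] = ~` S) //; apply/seteqP; split=> x /=; rewrite indicE.
  by move=> + Sx; rewrite mem_set //= ltNge r_le1.
by move=> nSx; rewrite memNset.
Qed.

Lemma USCf_dense_zero_set_trace (e g : nat -> X -> R) :
  ptws_seq_dense (range e) (USCf R X) ->
  (forall j x, e j x < 2^-1 <-> g j x != 0) -> zero_set_trace g.
Proof.
move=> dense gE S cS; have [u [Du ut]] := dense _ (USCf_indic S cS).
have /choice[s es] : forall n, exists j, e j = u n.
  by move=> n; have [j _ <-] := Du n; exists j.
have half_gt0 : (0 : R) < 2^-1 by rewrite invr_gt0.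
exists s => x; have near_ind := (cvgrPdist_lt _ _).1 (ut x) _ half_gt0.
split=> [Sx|g0].
  near=> k; have uk : 2^-1 <= u k x.
    have : `|\1_S x - u k x| < 2^-1 by near: k; exact: near_ind.
    by rewrite indicE mem_set // mulr1n ltr_norml => /andP[_]; lra.
  by apply/eqP; apply: contraT => /(gE _ _); rewrite es ltNge uk.
apply: contrapT => nSx; apply: (@filter_not_empty _ (\oo : set_system nat)).
near=> k; have : `|\1_S x - u k x| < 2^-1 by near: k; exact: near_ind.
rewrite indicE memNset // mulr0n sub0r normrN -es => /(le_lt_trans (ler_norm _)).
by move=> /(gE _ _) /eqP; apply; near: k; exact: g0.
Unshelve. all: end_near.
Qed.

Lemma USCf_zero_set_trace :
  seq_separable_subspace {ptws X -> R} (USCf R X) ->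
  exists g : nat -> X -> R, (forall j, continuous (g j)) /\ zero_set_trace g.
Proof.
move=> /seq_separable_ptwsP[D [DU cD dense]].
have [e De] : exists e : nat -> X -> R, D = range e.
  have cT : cozero_set R X (~` setT) by rewrite setCT; exact: cozero_set0.
  have [u [Du _]] := dense _ (USCf_indic setT cT).
  case/pfcard_geP: cD => [D0|/surjfunPex[e De]]; last by exists e.
  by move: (Du 0%N); rewrite D0.
have /choice[g /all_and2[cg ge]] : forall j, cozero_set R X [set x | e j x < 2^-1].
  by move=> j; apply: DU; rewrite De; exists j.
exists g; split=> //; apply: (USCf_dense_zero_set_trace e); first by rewrite -De.
by move=> j x; have := congr1 (fun A : set X => A x) (ge j) => /= ->.
Qed.

End zero_set_traces.

Definition clamp {R : realType} (c t : R) : R := Num.max (- c) (Num.min c t).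

Definition clamped_telescope {R : realType} (n : nat) (a : nat -> R) : R :=
  a 0%N + \sum_(m < n) clamp (3 * invpow2 m.+1) (a m.+1 - a m).

Section clamped_telescope_theory.
Context {R : realType}.

Lemma clamp_id (c t : R) : `|t| <= c -> clamp c t = t.
Proof.
by rewrite ler_norml => /andP[? ?]; rewrite /clamp (min_idPr _) // (max_idPr _).
Qed.

Lemma norm_clamp_le (c t : R) : 0 <= c -> `|clamp c t| <= c.
Proof.
move=> c_ge0; rewrite /clamp ler_norml le_max lexx ge_max ge_min lexx /= andbT.
by rewrite lerNl (le_trans _ c_ge0) // oppr_le0.
Qed.

Lemma sum_invpow2 (M d : nat) :
  \sum_(M <= m < M + d) invpow2 m.+1 = invpow2 M - invpow2 (M + d) :> R.
Proof.
elim: d => [|d IH]; first by rewrite addn0 big_geq // subrr.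
by rewrite addnS big_nat_recr ?leq_addr //= IH (invpow2S (M + d)); lra.
Qed.

Lemma sum_invpow2_le (M n : nat) : \sum_(M <= m < n) invpow2 m.+1 <= invpow2 M :> R.
Proof.
have [nM|Mn] := leqP n M; first by rewrite big_geq // ltW ?invpow2_gt0.
by rewrite -(subnKC (ltnW Mn)) sum_invpow2 gerBl ltW ?invpow2_gt0.
Qed.

(* Clamping keeps the tail of the telescope below 3 * 2^-M uniformly in n,
   whatever values the levels beyond M have reached. *)
Lemma clamped_telescope_cvg (a : nat -> nat -> R) (lam : nat -> R) (y : R) :
  (forall m, `|y - lam m| <= invpow2 m) ->
  (forall m, \forall n \near \oo, a n m = lam m) ->
  (fun n => clamped_telescope n (a n)) @ \oo --> y.
Proof.
move=> lam_y a_lam; apply/cvgrPdist_le => e e_gt0.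
have [M M_small] := invpow2_lt _ (divr_gt0 e_gt0 (ltr0Sn _ 3)).
have lam_step m : `|lam m.+1 - lam m| <= 3 * invpow2 m.+1.
  move: (lam_y m) (lam_y m.+1); rewrite (invpow2S m) !ler_norml.
  by move=> /andP[? ?] /andP[? ?]; apply/andP; split; lra.
have a_lamM : \forall n \near \oo, forall m : 'I_M.+2, a n m = lam m.
  by apply: filter_forall => m; exact: a_lam.
near=> n.
have Mn : (M <= n)%N by near: n; exists M.
have aE : forall k, (k <= M.+1)%N -> a n k = lam k.
  by near: n; apply: filterS a_lamM => n an k kM; exact: (an (@Ordinal M.+2 k kM)).
rewrite /clamped_telescope.
rewrite -(big_mkord xpredT (fun m => clamp (3 * invpow2 m.+1) (a n m.+1 - a n m))).
rewrite (big_cat_nat (leq0n M) Mn) /=.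
rewrite (eq_big_nat _ _ (F2 := fun m => lam m.+1 - lam m)); last first.
  move=> m /andP[_ mM].
  by rewrite (aE m.+1 (leqW mM)) (aE m (leqW (ltnW mM))); exact: clamp_id (lam_step m).
rewrite telescope_sumr // aE //.
set rest := \sum_(M <= m < n) _.
have rest_small : `|rest| <= 3 * invpow2 M.
  apply: le_trans (ler_norm_sum _ _ _) _.
  apply: le_trans (_ : \sum_(M <= m < n) 3 * invpow2 m.+1 <= _).
    by apply: ler_sum => m _; rewrite norm_clamp_le // mulr_ge0 // ltW ?invpow2_gt0.
  by rewrite -mulr_sumr ler_wpM2l // sum_invpow2_le.
move: (lam_y M) rest_small M_small; rewrite !ler_norml.
by move=> /andP[? ?] /andP[? ?] ?; apply/andP; split; lra.
Unshelve. all: end_near.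
Qed.

End clamped_telescope_theory.

Definition zero_test {R : realType} {X : Type} (g : nat -> X -> R)
    (s : seq nat) (x : X) : R :=
  Num.max 0 (1 - (size s)%:R * \sum_(j <- s) `|g j x|).

Definition first_zero_label {R : realType} {X : Type} (g : nat -> X -> R) (r : R)
    (l : seq (int * seq nat)) (x : X) : R :=
  foldr (fun p acc =>
    (p.1%:~R * r) * zero_test g p.2 x + (1 - zero_test g p.2 x) * acc) 0 l.

Section first_zero_label_theory.
Context {R : realType} {X : Type} (g : nat -> X -> R).

Lemma zero_test_eq1 s x : (forall j, j \in s -> g j x = 0) -> zero_test g s x = 1.
Proof.
move=> s0; rewrite /zero_test big_seq big1 => [|j /s0 ->]; last exact: normr0.
by rewrite mulr0 subr0; apply/max_idPr; exact: ler01.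
Qed.

Lemma zero_test_mkseq_eventually0 (c : nat -> nat) x k :
  g (c k) x != 0 -> \forall n \near \oo, zero_test g (mkseq c n) x = 0.
Proof.
move=> gk0; set a := `|g (c k) x|; have a_gt0 : 0 < a by rewrite normr_gt0.
near=> n; apply/max_idPl; rewrite subr_le0 size_mkseq.
have a_le : a <= \sum_(j <- mkseq c n) `|g j x|.
  rewrite /mkseq big_map (bigD1_seq k) ?iota_uniq //= ?mem_iota ?add0n.
    by rewrite lerDl sumr_ge0.
  by near: n; exists k.+1.
have n_ge : a^-1 < n%:R by near: n; exact: nbhs_infty_gtr.
have aVa : a^-1 * a = 1 by rewrite mulVf ?gt_eqF.
apply: le_trans (ler_wpM2l (ler0n _ n) a_le).
by rewrite -[leLHS]aVa ler_wpM2r // ltW.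
Unshelve. all: end_near.
Qed.

Lemma first_zero_label_nth r l x i0 : (i0 < size l)%N ->
  (forall i, (i < i0)%N -> zero_test g (nth (0%Z, [::]) l i).2 x = 0) ->
  zero_test g (nth (0%Z, [::]) l i0).2 x = 1 ->
  first_zero_label g r l x = (nth (0%Z, [::]) l i0).1%:~R * r.
Proof.
elim: l i0 => [//|[z s] l IH] [_ _ /= ->|i0 i0l before at_i0] /=.
  by rewrite mulr1 subrr mul0r addr0.
rewrite (before 0%N) // mulr0 add0r subr0 mul1r (IH i0) //.
by move=> i ii0; exact: (before i.+1).
Qed.

Lemma first_zero_label_eventually (lab : nat -> int) (c : nat -> nat -> nat) r x i0 :
  (forall k, g (c i0 k) x = 0) -> (forall i, (i < i0)%N -> exists k, g (c i k) x != 0) ->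
  \forall n \near \oo,
    first_zero_label g r (mkseq (fun i => (lab i, mkseq (c i) n)) n) x = (lab i0)%:~R * r.
Proof.
move=> at_i0 before.
have tests0 : \forall n \near \oo, forall i : 'I_i0, zero_test g (mkseq (c i) n) x = 0.
  apply: filter_forall => i; have [k gk] := before i (ltn_ord i).
  exact: zero_test_mkseq_eventually0 gk.
near=> n.
have i0n : (i0 < n)%N by near: n; exists i0.+1.
have t0 : forall i, (i < i0)%N -> zero_test g (mkseq (c i) n) x = 0.
  by near: n; apply: filterS tests0 => n t i ii0; exact: (t (Ordinal ii0)).
rewrite (first_zero_label_nth _ _ _ i0) ?size_mkseq ?nth_mkseq //=.
  by move=> i ii0; rewrite nth_mkseq /=; [exact: t0|exact: ltn_trans ii0 i0n].
by apply: zero_test_eq1 => _ /mapP[k _ ->]; exact: at_i0.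
Unshelve. all: end_near.
Qed.

End first_zero_label_theory.

Definition approximant {R : realType} {X : Type} (g : nat -> X -> R)
    (dat : seq (seq (int * seq nat))) (x : X) : R :=
  clamped_telescope (size dat).-1
    (fun m => first_zero_label g (invpow2 m) (nth [::] dat m) x).

Section approximant_continuity.
Context {R : realType} {X : topologicalType} (g : nat -> X -> R).
Hypothesis cg : forall j, continuous (g j).

Lemma continuous_sum_seq (I : Type) (r : seq I) (F : I -> X -> R) :
  (forall i, continuous (F i)) -> continuous (fun x => \sum_(i <- r) F i x).
Proof.
move=> cF; elim: r => [|i r IH] x.
  by under eq_fun do rewrite big_nil; exact: cvg_cst.
by under eq_fun do rewrite big_cons; apply: cvgD; [exact: cF|exact: IH].
Qed.

Lemma continuous_zero_test s : continuous (zero_test g s).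
Proof.
move=> x; apply: (@continuous_max R X (cst 0)); first exact: cvg_cst.
apply: cvgB; first exact: cvg_cst.
apply: cvgM; first exact: cvg_cst.
apply: continuous_sum_seq => j y.
exact: continuous_comp (cg j y) (@norm_continuous _ R^o _).
Qed.

Lemma continuous_first_zero_label r l : continuous (first_zero_label g r l).
Proof.
elim: l => [|[z s] l IH] x /=; first exact: cvg_cst.
have ct := continuous_zero_test s x.
apply: cvgD; apply: cvgM; [exact: cvg_cst|exact: ct| |exact: IH].
by apply: cvgB; [exact: cvg_cst|exact: ct].
Qed.

Lemma continuous_approximant dat : continuous (approximant g dat).
Proof.
move=> x; apply: cvgD; first exact: continuous_first_zero_label.
apply: continuous_sum_seq => m y.
apply: (@continuous_max R X (cst _)); first exact: cvg_cst.
apply: (@continuous_min R X (cst _)); first exact: cvg_cst.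
by apply: cvgB; exact: continuous_first_zero_label.
Qed.

End approximant_continuity.

Definition code_data (lab : nat -> int) (code : nat -> nat -> nat -> nat) (n : nat) :
    seq (seq (int * seq nat)) :=
  mkseq (fun m => mkseq (fun i => (lab i, mkseq (code m i) n)) n) n.+1.

Lemma approximant_code_data_cvg {R : realType} {X : Type} (g : nat -> X -> R)
    (lab : nat -> int) (code : nat -> nat -> nat -> nat) (y : R) (x : X) :
  (forall m, exists i, forall k, g (code m i k) x = 0) ->
  (forall m i, (forall k, g (code m i k) x = 0) ->
     `|y - (lab i)%:~R * invpow2 m| <= invpow2 m) ->
  (fun n => approximant g (code_data lab code n) x) @ \oo --> y.
Proof.
move=> cover lab_ok.
have first_zero m : exists i0, (forall k, g (code m i0 k) x = 0) /\
    forall i, (i < i0)%N -> exists k, g (code m i k) x != 0.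
  have ex : exists i, `[< forall k, g (code m i k) x = 0 >].
    by have [i ?] := cover m; exists i; exact/asboolP.
  case: (ex_minnP ex) => i0 /asboolP at_i0 i0_min; exists i0; split=> // i ii0.
  apply: contrapT => /forallNP gi0; move: ii0; rewrite ltnNge i0_min //.
  by apply/asboolP => k; move/negP: (gi0 k); rewrite negbK => /eqP.
have /choice[i0 /all_and2[at_i0 before_i0]] := first_zero.
under eq_fun do rewrite /approximant size_mkseq /=.
apply: (clamped_telescope_cvg _ (fun m => (lab (i0 m))%:~R * invpow2 m)).
  by move=> m; exact: lab_ok (at_i0 m).
move=> m; have ev := first_zero_label_eventually g lab (code m) (invpow2 m) x (i0 m)
  (at_i0 m) (before_i0 m).
near=> n; rewrite /code_data nth_mkseq; first by near: n; exact: ev.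
by near: n; exists m => // n /=; rewrite ltnS.
Unshelve. all: end_near.
Qed.

Section baire_one.
Context {R : realType} {X : topologicalType}.

Lemma B1fun_dyadic_zero_cover (f : X -> R) : B1fun R X f ->
  exists S : nat -> int * nat -> set X,
    [/\ forall m t, cozero_set R X (~` S m t),
        forall m t x, S m t x -> `|f x - t.1%:~R * invpow2 m| <= invpow2 m &
        forall m x, exists t, S m t x].
Proof.
case=> phi [cphi phi_f].
pose S m (t : int * nat) := \bigcap_j
  [set x | `|phi (t.2 + j)%N x - t.1%:~R * invpow2 m| <= invpow2 m].
exists S; split.
- move=> m t; rewrite setC_bigcap; apply: cozero_set_bigcup => j.
  rewrite (_ : ~` _ = [set x | invpow2 m < `|phi (t.2 + j)%N x - t.1%:~R * invpow2 m|]).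
    apply: cozero_set_gt => x.
    have cB : {for x, continuous (fun y => phi (t.2 + j)%N y - t.1%:~R * invpow2 m)}.
      by apply: cvgB; [exact: cphi|exact: cvg_cst].
    exact: continuous_comp cB (@norm_continuous _ R^o _).
  by apply/seteqP; split=> x /=; rewrite ltNge => /negP.
- move=> m [z J] x /= Sx.
  have cv : (fun j => `|phi j x - z%:~R * invpow2 m|) @ \oo -->
             `|f x - z%:~R * invpow2 m|.
    by apply: cvg_norm; apply: cvgB; [exact: phi_f|exact: cvg_cst].
  apply: (cvgr_to_le cv); exists J => // j /= Jj.
  by have := Sx (j - J)%N I; rewrite subnKC.
move=> m x; set r : R := invpow2 m; have r_gt0 : 0 < r := invpow2_gt0 m.
set z := Num.floor (f x / r); have /andP[zr rz] := mem_rg1_floor (f x / r).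
rewrite -/z ler_pdivlMr // in zr; rewrite -/z ltr_pdivrMr // mulrDl mul1r in rz.
have d_gt0 : 0 < r - (f x - z%:~R * r) by lra.
have [J _ phiJ] := (cvgrPdist_lt _ _).1 (phi_f x) _ d_gt0.
exists (z, J) => j _ /=; have := phiJ (J + j)%N (leq_addr _ _).
by rewrite /= -/r ltr_norml ler_norml => /andP[? ?]; apply/andP; split; lra.
Qed.

Lemma B1fun_approximants (g : nat -> X -> R) :
  zero_set_trace g -> ptws_seq_dense (range (approximant g)) (B1fun R X).
Proof.
move=> trace f /B1fun_dyadic_zero_cover[S [cS S_lab S_cover]].
have /choice[s sS] : forall mt : nat * (int * nat), exists s : nat -> nat,
    forall x, S mt.1 mt.2 x <-> \forall k \near \oo, g (s k) x = 0.
  by move=> [m t]; exact: trace (cS m t).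
(* Entry i of every level decodes to a label z, a start J and a shift N; its
   code is the trace of the level set S m (z, J), shifted by N. *)
pose dec i : int * nat * nat := odflt (0%Z, 0%N, 0%N) (unpickle i).
pose code m i k := s (m, (dec i).1) ((dec i).2 + k)%N.
exists (fun n => approximant g (code_data (fun i => (dec i).1.1) code n)).
split=> [n|x]; first by exists (code_data (fun i => (dec i).1.1) code n).
apply: approximant_code_data_cvg => [m|m i code0].
  have [t St] := S_cover m x; have [N _ gN] := (sS (m, t) x).1 St.
  exists (pickle (t, N)) => k; rewrite /code /dec pickleK /=.
  by apply: gN; exact: leq_addr.
apply: S_lab; apply/(sS (m, (dec i).1) x).2; exists (dec i).2 => // k /= ik.
by rewrite -(subnKC ik); exact: code0.
Qed.

End baire_one.

Lemma approximants_countable {R : realType} {X : Type} (g : nat -> X -> R) :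
  countable (range (approximant g)).
Proof. exact: sub_countable (card_image_le _ _) (countableP _). Qed.

Lemma continuous_B1fun {R : realType} {X : topologicalType} : Cfun R X `<=` B1fun R X.
Proof. by move=> f cf; exists (fun=> f); split=> // x; exact: cvg_cst. Qed.

Theorem corollary3p3 (R : realType) (X : topologicalType) :
  tychonoff_space X ->
  seq_separable_subspace {ptws X -> R} (USCf R X) ->
  seq_separable_subspace {ptws X -> R} (Cfun R X) /\
  seq_separable_subspace {ptws X -> R} (B1fun R X).
Proof.
move=> _ /USCf_zero_set_trace[g [cg trace]].
have dense := B1fun_approximants _ trace.
have DC : range (approximant g) `<=` Cfun R X.
  by move=> _ [dat _ <-]; exact: continuous_approximant.
have cD := approximants_countable g.
split; apply/seq_separable_ptwsP; exists (range (approximant g)); split=> //.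
  by move=> f /continuous_B1fun; exact: dense.
exact: subset_trans DC continuous_B1fun.
Qed.
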